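(* Let $\mathcal L$ be a recurrent language. Then $\mathcal L$ is eventually dendric if and only if $\mathcal L$ satisfies RBC.
   Context: $\mathcal{A}$ finite alphabet, $\mathcal{A}^*$ nonempty finite words. A language is a set $\mathcal L\subseteq\mathcal A^*$ with $\mathcal A\subseteq\mathcal L$, closed under subwords, and such that each $w\in\mathcal L$ has $a,b\in\mathcal A$ with $awb\in\mathcal L$. $\mathcal L$ is recurrent if for all $u,v\in\mathcal L$ there is $w\in\mathcal L$ with $uwv\in\mathcal L$. $Ex^\ell(w)=\{a: aw\in\mathcal L\}$, $Ex^r(w)=\{b: wb\in\mathcal L\}$, $Ex^{\ell r}(w)=\{(a,b): awb\in\mathcal L\}$. The extension graph $\mathscr E(w)$ is the bipartite graph whose vertex set is the disjoint union of $Ex^\ell(w)$ and $Ex^r(w)$, with an edge between $a$ and $b$ iff $(a,b)\in Ex^{\ell r}(w)$. $\mathcal L$ is eventually dendric if there is $n_0$ such that $\mathscr E(w)$ is a tree for all $w\in\mathcal L$ with $|w|\ge n_0$. Left special: $|Ex^\ell(w)|\ge2$; right special: $|Ex^r(w)|\ge2$; bispecial: both. A bispecial $w$ is regular bispecial if there is exactly one $\hat a\in Ex^\ell(w)$ with $\hat aw$ right special and exactly one $\hat b\in Ex^r(w)$ with $w\hat b$ left special. RBC: there is $n_0$ such that every bispecial word of length $\ge n_0$ is regular bispecial. *)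

From mathcomp Require Import all_boot.
Set Implicit Arguments. Unset Strict Implicit. Unset Printing Implicit Defensive.

Section Lang.
Variable A : finType.

Definition is_language (L : pred (seq A)) : Prop :=
  [/\ (forall w, L w -> w != [::]),
      (forall a : A, L [:: a]),
      (forall u w, L w -> u != [::] -> infix u w -> L u)
    & (forall w, L w -> exists a b, L (a :: rcons w b))].

Definition recurrent (L : pred (seq A)) : Prop :=
  forall u v, L u -> L v -> exists w, L w /\ L (u ++ w ++ v).

Definition Exl (L : pred (seq A)) (w : seq A) : {set A} := [set a | L (a :: w)].
Definition Exr (L : pred (seq A)) (w : seq A) : {set A} := [set b | L (rcons w b)].
Definition Exlr (L : pred (seq A)) (w : seq A) : {set A * A} :=
  [set ab | L (ab.1 :: rcons w ab.2)].

Definition ext_vertices (L : pred (seq A)) (w : seq A) : {set A + A} :=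
  [set x | match x with inl a => a \in Exl L w | inr b => b \in Exr L w end].

Definition ext_edge (L : pred (seq A)) (w : seq A) : rel (A + A) :=
  fun x y => match x, y with
             | inl a, inr b => (a, b) \in Exlr L w
             | inr b, inl a => (a, b) \in Exlr L w
             | _, _ => false
             end.

Definition graph_connected {T : finType} (V : {set T}) (e : rel T) : Prop :=
  forall u v, u \in V -> v \in V ->
    exists p : seq T, [/\ all (mem V) p, path e u p & last u p = v].

Definition graph_acyclic {T : finType} (V : {set T}) (e : rel T) : Prop :=
  ~ exists c : seq T, [/\ 3 <= size c, uniq c, all (mem V) c & cycle e c].

Definition is_tree {T : finType} (V : {set T}) (e : rel T) : Prop :=
  V != set0 /\ graph_connected V e /\ graph_acyclic V e.

Definition ext_graph_is_tree (L : pred (seq A)) (w : seq A) : Prop :=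
  is_tree (ext_vertices L w) (ext_edge L w).

Definition eventually_dendric (L : pred (seq A)) : Prop :=
  exists n0, forall w, L w -> n0 <= size w -> ext_graph_is_tree L w.

Definition left_special (L : pred (seq A)) (w : seq A) : bool := 2 <= #|Exl L w|.
Definition right_special (L : pred (seq A)) (w : seq A) : bool := 2 <= #|Exr L w|.
Definition bispecial (L : pred (seq A)) (w : seq A) : bool :=
  [&& L w, left_special L w & right_special L w].

Definition regular_bispecial (L : pred (seq A)) (w : seq A) : Prop :=
  bispecial L w /\
  (exists! a, a \in Exl L w /\ right_special L (a :: w)) /\
  (exists! b, b \in Exr L w /\ left_special L (rcons w b)).

Definition RBC (L : pred (seq A)) : Prop :=
  exists n0, forall w, bispecial L w -> n0 <= size w -> regular_bispecial L w.

End Lang.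

(* Let m(w) = #E(w) - #E^l(w) - #E^r(w) + 1 and let p be the factor
   complexity.  Summed over the words of length n, the m(w) give
   p(n+2) - 2 p(n+1) + p(n).  A tree extension graph (fewer edges than
   vertices) as well as the RBC (at most one right special left extension)
   force m(w) <= 0 for long words; the first difference of p is then
   nonincreasing, hence eventually constant, and all m(w) vanish.
   A neutral word with unique special extensions has a double star as
   extension graph, which is a tree and makes the word regular if it is
   bispecial.  For a dendric language, the number of right special words of
   length n is nondecreasing and bounded by p(n+1) - p(n), so it is
   eventually constant, which forces the special extensions to be unique. *)

From mathcomp Require Import all_boot zify.
From Stdlib Require Import Classical.
Set Implicit Arguments. Unset Strict Implicit. Unset Printing Implicit Defensive.

Lemma nonincr_le (f : nat -> nat) N :
  (forall n, N <= n -> f n.+1 <= f n) -> forall n, N <= n -> f n <= f N.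
Proof.
move=> f_nonincr n /subnK <-; elim: (n - N) => [|k IH]; first by rewrite add0n.
by rewrite addSn; apply: leq_trans (f_nonincr _ (leq_addl _ _)) IH.
Qed.

Lemma nonincr_eventually_const (f : nat -> nat) N :
  (forall n, N <= n -> f n.+1 <= f n) -> exists2 M, N <= M & forall n, M <= n -> f n = f M.
Proof.
move=> f_nonincr; move: {2}(f N) (leqnn (f N)) => k.
elim: k N f_nonincr => [|k IH] N f_nonincr fNk.
  by exists N => // n /(nonincr_le f_nonincr); lia.
have [fN|/not_all_ex_not [n /(imply_to_and (N <= n)) [Nn fn]]] :=
  classic (forall n, N <= n -> f n = f N); first by exists N.
have fnN := nonincr_le f_nonincr Nn.
have [|M nM fM] := IH n (fun m nm => f_nonincr m (leq_trans Nn nm)); first by lia.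
by exists M => //; apply: leq_trans nM.
Qed.

Section Graphs.
Variables (T : finType) (V : {set T}) (e : rel T).

Definition leaf (v : T) : bool :=
  [forall y, forall z, [&& y \in V, z \in V, e v y & e v z] ==> (y == z)].

Lemma leafP v y z : leaf v -> y \in V -> z \in V -> e v y -> e v z -> y = z.
Proof. by move=> /forallP /(_ y) /forallP /(_ z) /implyP lv *; apply/eqP/lv/and4P. Qed.

Lemma acyclic_sub (V' : {set T}) (e' : rel T) :
  V' \subset V -> subrel e' e -> graph_acyclic V e -> graph_acyclic V' e'.
Proof.
move=> sV se acyc [c [sz un al cy]]; apply: acyc; exists c; split => //.
  by apply/allP => x /(allP al); apply: (subsetP sV).
exact: (sub_cycle se).
Qed.

Lemma acyclic_few_branch_points (S : {set T}) :
  (forall x y z, e y x -> e x z -> y != z -> x \in S) -> #|S| <= 2 ->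
  graph_acyclic V e.
Proof.
move=> branchS cardS [c [sz un _ cy]].
suff /(uniq_leq_size un) : {subset c <= enum S}.
  by rewrite -cardE => /leq_trans/(_ cardS); rewrite leqNgt sz.
move=> x /rot_to [i [|y [|z s]] Ec]; move: cy un sz;
  rewrite -(rot_cycle i) -(rot_uniq i) -(size_rot i) Ec //= rcons_path /=.
move=> /and4P [exy _ _ ezx] /and4P [_ + _ _] _; rewrite mem_enum.
by move=> ny; apply: branchS ezx exy _; apply: contraNneq ny => <-; apply: mem_last.
Qed.

Hypotheses (e_irr : irreflexive e) (acyc : graph_acyclic V e).

Lemma acyclic_path_last_nbr q y0 z y :
  let p := rcons (rcons q y0) z in
  sorted e p -> uniq p -> all (mem V) p -> y \in rcons q y0 -> e z y -> y = y0.
Proof.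
move=> p; rewrite /p mem_rcons inE => so un al /predU1P [//|/splitPr yq] ezy.
case: yq so un al => q1 q2; rewrite -!cats1 -!catA /= => so un al; exfalso.
apply: acyc; exists (y :: q2 ++ [:: y0; z]); split.
- by rewrite /= size_cat /= !addnS.
- by move: un; rewrite cat_uniq => /and3P [].
- by move: al; rewrite all_cat => /andP [].
- by move: so; rewrite sorted_cat_cons /cycle rcons_path last_cat /= ezy => /andP [_ ->].
Qed.

Lemma leafless_path (x : T) k : x \in V -> (forall v, v \in V -> ~~ leaf v) ->
  exists q z, [/\ size q = k, sorted e (rcons q z), uniq (rcons q z) & all (mem V) (rcons q z)].
Proof.
move=> xV noleaf; elim: k => [|k [q [z [sz so un al]]]]; first by exists [::], x; rewrite /= xV.
have zV : z \in V by apply: (allP al); rewrite mem_rcons mem_head.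
have [y1 [y2 [y1V y2V e1 e2 y12]]] : exists y1 y2,
    [/\ y1 \in V, y2 \in V, e z y1, e z y2 & y1 != y2].
  move: (noleaf z zV); rewrite negb_forall => /existsP [y1].
  rewrite negb_forall => /existsP [y2]; rewrite negb_imply => /andP [/and4P [? ? ? ?] ?].
  by exists y1, y2.
suff [y [yV ezy ynew]] : exists y, [/\ y \in V, e z y & y \notin rcons q z].
  exists (rcons q z), y; split; first by rewrite size_rcons sz.
  - by case: q so {sz un al ynew} => [|a q] /= so; rewrite ?ezy // rcons_path so last_rcons.
  - by rewrite rcons_uniq ynew un.
  - by rewrite -cats1 all_cat al /= yV.
have old y : e z y -> y \in rcons q z -> y \in q.
  by rewrite mem_rcons inE => ezy /predU1P [yz|//]; rewrite yz e_irr in ezy.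
case: (boolP (y1 \in rcons q z)) => [/(old _ e1) y1q|]; last by exists y1.
case: (boolP (y2 \in rcons q z)) => [/(old _ e2) y2q|]; last by exists y2.
case/lastP: q so un al y1q y2q {sz old} => [//|q y0] so un al y1q y2q.
move: y12; rewrite (acyclic_path_last_nbr so un al y1q e1).
by rewrite (acyclic_path_last_nbr so un al y2q e2) eqxx.
Qed.

Lemma acyclic_leaf : V != set0 -> exists2 v, v \in V & leaf v.
Proof.
case/set0Pn => x xV.
have [v /andP [vV lv]|noleaf] := pickP [pred v | (v \in V) && leaf v]; first by exists v.
have [|q [z [sz _ un al]]] := leafless_path #|V| xV.
  by move=> v vV; apply/negP => lv; have := noleaf v; rewrite /= vV lv.
have /(uniq_leq_size un) : {subset rcons q z <= enum V} by move=> y /(allP al); rewrite mem_enum.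
by rewrite size_rcons sz -cardE ltnn.
Qed.

End Graphs.

Section Bipartite.
Variable A : finType.

Definition bip_verts (X Y : {set A}) : {set A + A} :=
  [set x | match x with inl a => a \in X | inr b => b \in Y end].

Definition bip_edge (D : {set A * A}) : rel (A + A) :=
  fun x y => match x, y with
             | inl a, inr b | inr b, inl a => (a, b) \in D
             | _, _ => false
             end.

Lemma bip_edge_irr D : irreflexive (bip_edge D).
Proof. by case. Qed.

(* Delete a leaf and the at most one edge at it. *)
Lemma bip_forest_card (X Y : {set A}) (D : {set A * A}) :
  {subset D <= setX X Y} -> graph_acyclic (bip_verts X Y) (bip_edge D) ->
  0 < #|X| + #|Y| -> #|D| < #|X| + #|Y|.
Proof.
move Hn: (#|X| + #|Y|) => n; elim: n X Y D Hn => // n IH X Y D Hn sub acyc _.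
have cardDX : #|D| <= #|X| * #|Y|.
  by rewrite -cardsX; apply/subset_leq_card/subsetP.
have [v vV lv] : exists2 v, v \in bip_verts X Y & leaf (bip_verts X Y) (bip_edge D) v.
  apply: acyclic_leaf (@bip_edge_irr D) acyc _; apply/set0Pn.
  have [X0|[a aX]] := set_0Vmem X; last by exists (inl a); rewrite inE.
  have [Y0|[b bY]] := set_0Vmem Y; last by exists (inr b); rewrite inE.
  by rewrite X0 Y0 !cards0 in Hn.
have acyc_sub (X' Y' : {set A}) (D' : {set A * A}) : X' \subset X -> Y' \subset Y -> D' \subset D ->
    graph_acyclic (bip_verts X' Y') (bip_edge D').
  move=> /subsetP sX /subsetP sY /subsetP sD; apply: acyclic_sub acyc.
    by apply/subsetP => -[x|x]; rewrite !inE; [apply: sX | apply: sY].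
  by move=> [x|x] [y|y] //= /sD.
case: v vV lv => [a|b]; rewrite inE => vV lv.
- pose D' := D :&: [set p | p.1 != a].
  have cardD : #|D| <= #|D'|.+1.
    rewrite -(cardsID [set p | p.1 != a] D) -addn1 leq_add2l.
    apply/card_le1_eqP => -[a1 b1] [a2 b2]; rewrite !inE /= !negbK.
    move=> /andP [/eqP -> ab1] /andP [/eqP -> ab2]; congr (_, _).
    have inY b' : (a, b') \in D -> inr b' \in bip_verts X Y.
      by move/sub; rewrite !inE => /andP [].
    by case: (leafP lv (inY _ ab1) (inY _ ab2) ab1 ab2).
  have cardX : #|X| = #|X :\ a|.+1 by rewrite (cardsD1 a) vV.
  have sub' : {subset D' <= setX (X :\ a) Y}.
    by move=> [a1 b1]; rewrite !inE /= => /andP [/sub]; rewrite inE /= => /andP [-> ->] ->.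
  have /IH /(_ sub') : #|X :\ a| + #|Y| = n by move: Hn; rewrite cardX addSn => -[].
  move=> /(_ (acyc_sub _ _ _ (subsetDl _ _) (subxx _) (subsetIl _ _))) hD'.
  by case: (posnP n) => [n0|/hD']; nia.
- pose D' := D :&: [set p | p.2 != b].
  have cardD : #|D| <= #|D'|.+1.
    rewrite -(cardsID [set p | p.2 != b] D) -addn1 leq_add2l.
    apply/card_le1_eqP => -[a1 b1] [a2 b2]; rewrite !inE /= !negbK.
    move=> /andP [/eqP -> ab1] /andP [/eqP -> ab2]; congr (_, _).
    have inX a' : (a', b) \in D -> inl a' \in bip_verts X Y.
      by move/sub; rewrite !inE => /andP [].
    by case: (leafP lv (inX _ ab1) (inX _ ab2) ab1 ab2).
  have cardY : #|Y| = #|Y :\ b|.+1 by rewrite (cardsD1 b) vV.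
  have sub' : {subset D' <= setX X (Y :\ b)}.
    by move=> [a1 b1]; rewrite !inE /= => /andP [/sub]; rewrite inE /= => /andP [-> ->] ->.
  have /IH /(_ sub') : #|X| + #|Y :\ b| = n by move: Hn; rewrite cardY addnS => -[].
  move=> /(_ (acyc_sub _ _ _ (subxx _) (subsetDl _ _) (subsetIl _ _))) hD'.
  by case: (posnP n) => [n0|/hD']; nia.
Qed.

Lemma bip_double_star_tree (X Y : {set A}) (D : {set A * A}) ah bh :
  ah \in X -> bh \in Y ->
  (forall b, b \in Y -> (ah, b) \in D) -> (forall a, a \in X -> (a, bh) \in D) ->
  (forall a b1 b2, (a, b1) \in D -> (a, b2) \in D -> b1 != b2 -> a = ah) ->
  (forall b a1 a2, (a1, b) \in D -> (a2, b) \in D -> a1 != a2 -> b = bh) ->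
  is_tree (bip_verts X Y) (bip_edge D).
Proof.
move=> ahX bhY ahD bhD branchX branchY; split; last split.
- by apply/set0Pn; exists (inl ah); rewrite inE.
- move=> [a|b] [a'|b']; rewrite !inE => u v.
  + by exists [:: inr bh; inl a']; rewrite /= !inE bhY v !bhD.
  + by exists [:: inr bh; inl ah; inr b']; rewrite /= !inE bhY ahX v !bhD ?ahD.
  + by exists [:: inl ah; inr bh; inl a']; rewrite /= !inE bhY ahX v !ahD ?bhD.
  + by exists [:: inl ah; inr b']; rewrite /= !inE ahX v !ahD.
- apply: (@acyclic_few_branch_points _ _ _ [set inl ah; inr bh]); last by rewrite cards2.
  move=> [a|b] [y|y] [z|z] //= e1 e2 ne; rewrite !inE.
    by rewrite (branchX a y z e1 e2 ne) eqxx.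
  by rewrite (branchY b y z e1 e2 ne) eqxx orbT.
Qed.

End Bipartite.

Lemma sum_card_le_unique (I T : finType) (X : {set I}) (Y : I -> {set T}) :
  0 < #|X| -> {in X &, forall a a', 1 < #|Y a| -> 1 < #|Y a'| -> a = a'} ->
  exists2 ah, ah \in X & \sum_(a in X) #|Y a| <= #|Y ah| + #|X|.-1.
Proof.
move=> X0 uniqY.
have [ah ahX others] : exists2 ah, ah \in X & forall a, a \in X -> a != ah -> #|Y a| <= 1.
  have [ah /andP [ahX ahY]|none] := pickP [pred a | (a \in X) && (1 < #|Y a|)].
    exists ah => // a aX; apply: contraR; rewrite -ltnNge => aY; exact/eqP/uniqY.
  have /card_gt0P [a0 a0X] := X0; exists a0 => // a aX _.
  by move: (none a); rewrite /= aX ltnNge => /negbFE.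
exists ah => //; rewrite (bigD1 ah) //= leq_add2l (cardsD1 ah X) ahX add1n /=.
have -> : #|X :\ ah| = \sum_(a in X | a != ah) 1.
  by rewrite sum1dep_card; apply: eq_card => a; rewrite !inE andbC.
by apply: leq_sum => a /andP [aX neq]; apply: others.
Qed.

Lemma tuple_ext_bij (A : finType) n (h : n.-tuple A * A -> n.+1.-tuple A) :
  injective h -> bijective h.
Proof. by move=> hinj; apply: inj_card_bij hinj _; rewrite card_prod !card_tuple expnS mulnC. Qed.

Section Language.
Variables (A : finType) (L : pred (seq A)).
Hypothesis hL : is_language L.

Lemma lang_infix u w : L w -> u != [::] -> infix u w -> L u.
Proof. by case: hL => _ _ + _; apply. Qed.

Lemma lang_behead a w : L (a :: w) -> w != [::] -> L w.
Proof. by move=> Law w0; apply: lang_infix Law w0 (infix_cons _ _). Qed.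

Lemma lang_belast w b : L (rcons w b) -> w != [::] -> L w.
Proof. by move=> Lwb w0; apply: lang_infix Lwb w0 (infix_rcons _ _). Qed.

Lemma lang_ext_l a w b : L (a :: rcons w b) -> L (a :: w).
Proof. by rewrite -rcons_cons => /lang_belast ->. Qed.

Lemma lang_ext_r a w b : L (a :: rcons w b) -> L (rcons w b).
Proof. by move=> /lang_behead ->; case: w. Qed.

Lemma Exl_gt0 w : L w -> 0 < #|Exl L w|.
Proof.
case: hL => _ _ _ /[apply] -[a [b Lawb]].
by apply/card_gt0P; exists a; rewrite inE (lang_ext_l Lawb).
Qed.

Lemma Exr_gt0 w : L w -> 0 < #|Exr L w|.
Proof.
case: hL => _ _ _ /[apply] -[a [b Lawb]].
by apply/card_gt0P; exists b; rewrite inE (lang_ext_r Lawb).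
Qed.

Lemma Exr_cons_sub a w : Exr L (a :: w) \subset Exr L w.
Proof. by apply/subsetP => b; rewrite !inE; apply: lang_ext_r. Qed.

Lemma Exl_rcons_sub w b : Exl L (rcons w b) \subset Exl L w.
Proof. by apply/subsetP => a; rewrite !inE; apply: lang_ext_l. Qed.

Lemma Exlr_sub w : {subset Exlr L w <= setX (Exl L w) (Exr L w)}.
Proof. by move=> [a b]; rewrite !inE /= => Lawb; rewrite (lang_ext_l Lawb) (lang_ext_r Lawb). Qed.

Lemma card_Exlr_cons w : #|Exlr L w| = \sum_(a in Exl L w) #|Exr L (a :: w)|.
Proof.
under eq_bigr do rewrite -sum1_card; rewrite pair_big_dep -sum1_card.
apply: eq_bigl => -[a b]; rewrite !inE /=.
by apply/idP/andP => [Lawb|[]//]; rewrite (lang_ext_l Lawb).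
Qed.

Lemma card_Exlr_rcons w : #|Exlr L w| = \sum_(b in Exr L w) #|Exl L (rcons w b)|.
Proof.
under eq_bigr do rewrite -sum1_card; rewrite pair_big_dep -sum1_card.
rewrite (reindex_inj (h := fun p : A * A => (p.2, p.1))); last by move=> [? ?] [? ?] [-> ->].
apply: eq_bigl => -[a b]; rewrite !inE /=.
by apply/idP/andP => [Lawb|[]//]; rewrite (lang_ext_r Lawb).
Qed.

Definition complexity n := #|[set t : n.-tuple A | L t]|.

Lemma complexityE n : complexity n = \sum_(t : n.-tuple A | L t) 1.
Proof. by rewrite sum1dep_card. Qed.

Lemma sum_tuple_cons n (F : seq A -> nat) : 0 < n ->
  \sum_(t : n.+1.-tuple A | L t) F t =
    \sum_(t : n.-tuple A | L t) \sum_(a in Exl L t) F (a :: t).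
Proof.
move=> n0; rewrite pair_big_dep (reindex (fun p : n.-tuple A * A => [tuple of p.2 :: p.1])) /=.
  apply: eq_bigl => -[t a] /=; rewrite inE; apply/idP/andP => [Lat|[]//]; split => //.
  by apply: lang_behead Lat _; rewrite -size_eq0 size_tuple -lt0n.
by apply/onW_bij/tuple_ext_bij => -[t a] [t' a'] /(congr1 val) [-> /val_inj ->].
Qed.

Lemma sum_tuple_rcons n (F : seq A -> nat) : 0 < n ->
  \sum_(t : n.+1.-tuple A | L t) F t =
    \sum_(t : n.-tuple A | L t) \sum_(b in Exr L t) F (rcons t b).
Proof.
move=> n0; rewrite pair_big_dep (reindex (fun p : n.-tuple A * A => [tuple of rcons p.1 p.2])) /=.
  apply: eq_bigl => -[t b] /=; rewrite inE; apply/idP/andP => [Ltb|[]//]; split => //.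
  by apply: lang_belast Ltb _; rewrite -size_eq0 size_tuple -lt0n.
by apply/onW_bij/tuple_ext_bij => -[t b] [t' b'] /(congr1 val)/rcons_inj [/val_inj -> ->].
Qed.

Lemma sum_card_Exl n : 0 < n -> \sum_(t : n.-tuple A | L t) #|Exl L t| = complexity n.+1.
Proof.
move=> n0; rewrite complexityE (sum_tuple_cons (fun=> 1) n0).
by apply: eq_bigr => t _; rewrite sum1_card.
Qed.

Lemma sum_card_Exr n : 0 < n -> \sum_(t : n.-tuple A | L t) #|Exr L t| = complexity n.+1.
Proof.
move=> n0; rewrite complexityE (sum_tuple_rcons (fun=> 1) n0).
by apply: eq_bigr => t _; rewrite sum1_card.
Qed.

Lemma sum_card_Exlr n : 0 < n -> \sum_(t : n.-tuple A | L t) #|Exlr L t| = complexity n.+2.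
Proof.
move=> n0; rewrite -sum_card_Exr // (sum_tuple_cons (fun t => #|Exr L t|) n0).
by apply: eq_bigr => t _; apply: card_Exlr_cons.
Qed.

Lemma complexity_nondecr n : 0 < n -> complexity n <= complexity n.+1.
Proof.
move=> n0; rewrite -(sum_card_Exr n0) complexityE.
by apply: leq_sum => t; apply: Exr_gt0.
Qed.

(* The bilateral multiplicity m(w) = #E(w) - #E^l(w) - #E^r(w) + 1 is
   nonpositive, resp. zero. *)
Definition nonstrong w := #|Exlr L w| < #|Exl L w| + #|Exr L w|.
Definition neutral w := (#|Exlr L w|).+1 == #|Exl L w| + #|Exr L w|.

Lemma sum_card_Exlr_succ n : 0 < n ->
  \sum_(t : n.-tuple A | L t) (#|Exlr L t|).+1 = complexity n.+2 + complexity n.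
Proof.
move=> n0; rewrite -sum_card_Exlr // complexityE -big_split.
by apply: eq_bigr => t _; rewrite -addn1.
Qed.

Lemma sum_card_Exl_Exr n : 0 < n ->
  \sum_(t : n.-tuple A | L t) (#|Exl L t| + #|Exr L t|) = (complexity n.+1).*2.
Proof. by move=> n0; rewrite big_split sum_card_Exl // sum_card_Exr // -addnn. Qed.

Definition unique_right_special_ext w :=
  {in Exl L w &, forall a a', right_special L (a :: w) -> right_special L (a' :: w) -> a = a'}.

Definition unique_left_special_ext w :=
  {in Exr L w &, forall b b', left_special L (rcons w b) -> left_special L (rcons w b') -> b = b'}.

Lemma unique_ext_nonstrong w : L w -> unique_right_special_ext w -> nonstrong w.
Proof.
move=> Lw /(sum_card_le_unique (Exl_gt0 Lw)) [ah _ le]; rewrite /nonstrong card_Exlr_cons.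
by have := subset_leq_card (Exr_cons_sub ah w); have := Exl_gt0 Lw; have := Exr_gt0 Lw; lia.
Qed.

Lemma tree_nonstrong w : L w -> ext_graph_is_tree L w -> nonstrong w.
Proof.
move=> Lw [_ [_ acyc]]; apply: (bip_forest_card (@Exlr_sub w) acyc).
by have := Exl_gt0 Lw; lia.
Qed.

Lemma neutral_full_right_ext w : L w -> neutral w -> unique_right_special_ext w ->
  exists2 ah, ah \in Exl L w & Exr L (ah :: w) = Exr L w.
Proof.
move=> Lw /eqP nw /(sum_card_le_unique (Exl_gt0 Lw)) [ah ahX le]; exists ah => //.
apply/eqP; rewrite eqEcard Exr_cons_sub /=; move: nw; rewrite card_Exlr_cons.
by have := Exl_gt0 Lw; lia.
Qed.

Lemma neutral_full_left_ext w : L w -> neutral w -> unique_left_special_ext w ->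
  exists2 bh, bh \in Exr L w & Exl L (rcons w bh) = Exl L w.
Proof.
move=> Lw /eqP nw /(sum_card_le_unique (Exr_gt0 Lw)) [bh bhY le]; exists bh => //.
apply/eqP; rewrite eqEcard Exl_rcons_sub /=; move: nw; rewrite card_Exlr_rcons.
by have := Exr_gt0 Lw; lia.
Qed.

Lemma regular_unique_right_ext w : L w ->
  (bispecial L w -> regular_bispecial L w) -> unique_right_special_ext w.
Proof.
move=> Lw reg a a' aX a'X ra ra'.
have rw : right_special L w := leq_trans ra (subset_leq_card (Exr_cons_sub a w)).
have [lw|] := boolP (left_special L w).
  have [_ [[ah [_ ahU]] _]] := reg (introT and3P (And3 Lw lw rw)).
  by rewrite -(ahU a (conj aX ra)) (ahU a' (conj a'X ra')).
by rewrite /left_special -ltnNge ltnS => /card_le1_eqP; apply.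
Qed.

Lemma regular_unique_left_ext w : L w ->
  (bispecial L w -> regular_bispecial L w) -> unique_left_special_ext w.
Proof.
move=> Lw reg b b' bY b'Y lb lb'.
have lw : left_special L w := leq_trans lb (subset_leq_card (Exl_rcons_sub w b)).
have [rw|] := boolP (right_special L w).
  have [_ [_ [bh [_ bhU]]]] := reg (introT and3P (And3 Lw lw rw)).
  by rewrite -(bhU b (conj bY lb)) (bhU b' (conj b'Y lb')).
by rewrite /right_special -ltnNge ltnS => /card_le1_eqP; apply.
Qed.

Lemma neutral_regular w : bispecial L w -> neutral w ->
  unique_right_special_ext w -> unique_left_special_ext w -> regular_bispecial L w.
Proof.
move=> bw nw ur ul; have /and3P [Lw lw rw] := bw; split => //; split.
- have [ah ahX full] := neutral_full_right_ext Lw nw ur.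
  have rah : right_special L (ah :: w) by rewrite /right_special full.
  by exists ah; split => // a [aX ra]; apply: ur.
- have [bh bhY full] := neutral_full_left_ext Lw nw ul.
  have lbh : left_special L (rcons w bh) by rewrite /left_special full.
  by exists bh; split => // b [bY lb]; apply: ul.
Qed.

(* The extension graph is then a double star centred on the edge (ah, bh). *)
Lemma neutral_tree w : L w -> neutral w ->
  unique_right_special_ext w -> unique_left_special_ext w -> ext_graph_is_tree L w.
Proof.
move=> Lw nw ur ul.
have [ah ahX fullr] := neutral_full_right_ext Lw nw ur.
have [bh bhY fulll] := neutral_full_left_ext Lw nw ul.
apply: (bip_double_star_tree ahX bhY).
- by move=> b; rewrite -fullr !inE.
- by move=> a; rewrite -fulll !inE.
- move=> a b1 b2 ab1 ab2 b12.
  have /setXP [aX _] := Exlr_sub ab1.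
  have ra : right_special L (a :: w) by apply/card_gt1P; exists b1, b2; rewrite !inE in ab1 ab2 *.
  apply: ur => //; rewrite /right_special fullr.
  exact: leq_trans ra (subset_leq_card (Exr_cons_sub a w)).
- move=> b a1 a2 ab1 ab2 a12.
  have /setXP [_ bY] := Exlr_sub ab1.
  have lb : left_special L (rcons w b) by apply/card_gt1P; exists a1, a2; rewrite !inE in ab1 ab2 *.
  apply: ul => //; rewrite /left_special fulll.
  exact: leq_trans lb (subset_leq_card (Exl_rcons_sub w b)).
Qed.

End Language.

(* One side of the extension structure: [X], [Y], [ext] stand for
   ([Exl L], [Exr L], cons) or ([Exr L], [Exl L], rcons). *)
Section SpecialExtensions.
Variables (A : finType) (L : pred (seq A)) (X Y : seq A -> {set A}).
Variables (ext : A -> seq A -> seq A) (N B : nat).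
Hypothesis sum_ext : forall n (F : seq A -> nat), N <= n ->
  \sum_(t : n.+1.-tuple A | L t) F t = \sum_(t : n.-tuple A | L t) \sum_(a in X t) F (ext a t).
Hypothesis sum_card_Y : forall n, N <= n ->
  \sum_(t : n.-tuple A | L t) #|Y t| = complexity L n.+1.
Hypothesis complexity_diff_le : forall n, N <= n -> complexity L n.+1 <= complexity L n + B.
Hypothesis Y_gt0 : forall w, L w -> 0 < #|Y w|.
Hypothesis neutral_ext : forall w, L w -> N <= size w ->
  (\sum_(a in X w) #|Y (ext a w)|).+1 = #|X w| + #|Y w|.

Let special w := 1 < #|Y w|.
Let special_ext w := #|[set a in X w | special (ext a w)]|.
Let nspecial n := \sum_(t : n.-tuple A | L t) special t.

Let special_ext_ge w : L w -> N <= size w -> special w <= special_ext w.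
Proof.
move=> Lw Nw; have [sw|//] := boolP (special w); rewrite lt0n cards_eq0.
apply/negP => /eqP none.
have : \sum_(a in X w) #|Y (ext a w)| <= \sum_(a in X w) 1.
  apply: leq_sum => a aX; rewrite leqNgt; apply/negP => sa.
  by have := in_set0 a; rewrite -none inE aX /special sa.
by rewrite sum1_card; have := neutral_ext Lw Nw; rewrite /special in sw; lia.
Qed.

Let nspecial_succ n : N <= n -> nspecial n.+1 = \sum_(t : n.-tuple A | L t) special_ext t.
Proof.
move=> Nn; rewrite /nspecial (sum_ext (fun w => special w : nat) Nn); apply: eq_bigr => t _.
by rewrite /special_ext -sum1dep_card big_mkcondr; apply: eq_bigr => a _; case: ifP.
Qed.

Let nspecial_nondecr n : N <= n -> nspecial n <= nspecial n.+1.
Proof.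
move=> Nn; rewrite nspecial_succ //; apply: leq_sum => t Lt.
by apply: special_ext_ge; rewrite ?size_tuple.
Qed.

(* Each special word has at least two extensions, hence contributes at least
   one to p(n + 1) - p(n). *)
Let nspecial_le n : N <= n -> nspecial n <= B.
Proof.
move=> Nn; have := complexity_diff_le Nn; rewrite -sum_card_Y // complexityE.
have : \sum_(t : n.-tuple A | L t) (special t + 1) <=
         \sum_(t : n.-tuple A | L t) #|Y t|.
  by apply: leq_sum => t /Y_gt0; rewrite /special; case: (ltnP 1 #|Y t|) => /=; lia.
by rewrite /nspecial big_split /=; lia.
Qed.

Lemma unique_special_ext_of_neutral : exists M, forall w, L w -> M <= size w ->
  {in X w &, forall a a', 1 < #|Y (ext a w)| -> 1 < #|Y (ext a' w)| -> a = a'}.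
Proof.
have [|M NM const] := nonincr_eventually_const (f := fun n => B - nspecial n) (N := N).
  by move=> n Nn; have := nspecial_nondecr Nn; have := nspecial_le (leqW Nn); lia.
exists M => w Lw Mw a a' aX a'X sa sa'; have Nw := leq_trans NM Mw.
have le (t : (size w).-tuple A) :
    L t -> (special t : nat) <= special_ext t ?= iff (special t == special_ext t :> nat).
  by move=> Lt; apply: leqif_eq; apply: special_ext_ge; rewrite ?size_tuple.
have /esym/eqP : nspecial (size w).+1 = nspecial (size w).
  have := const _ Mw; have := const _ (leqW Mw); have := nspecial_le Nw.
  by have := nspecial_le (leqW Nw); have := nspecial_nondecr Nw; lia.
rewrite nspecial_succ // (leqif_sum le).2 => /forall_inP /(_ (in_tuple w) Lw) /eqP ew.
have /card_le1_eqP : special_ext w <= 1 by rewrite -[special_ext w]ew leq_b1.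
by apply; rewrite inE ?aX ?a'X.
Qed.

End SpecialExtensions.

Section Eventually.
Variables (A : finType) (L : pred (seq A)).
Hypothesis hL : is_language L.

Definition eventually (P : seq A -> Prop) := exists n0, forall w, L w -> n0 <= size w -> P w.

Lemma eventually_and (P Q : seq A -> Prop) :
  eventually P -> eventually Q -> eventually (fun w => P w /\ Q w).
Proof.
move=> [m HP] [n HQ]; exists (maxn m n) => w Lw; rewrite geq_max => /andP [mw nw].
by split; [apply: HP | apply: HQ].
Qed.

Lemma eventually_pos (P : seq A -> Prop) :
  eventually P -> exists2 N, 0 < N & forall w, L w -> N <= size w -> P w.
Proof. by move=> [n HP]; exists n.+1 => // w Lw /ltnW; apply: HP. Qed.

Lemma complexity_concave N : 0 < N -> (forall w, L w -> N <= size w -> nonstrong L w) ->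
  forall n, N <= n -> complexity L n.+2 - complexity L n.+1 <= complexity L n.+1 - complexity L n.
Proof.
move=> N0 ns n Nn; have n0 := leq_trans N0 Nn.
have : complexity L n.+2 + complexity L n <= (complexity L n.+1).*2.
  rewrite -sum_card_Exlr_succ // -sum_card_Exl_Exr //.
  by apply: leq_sum => t Lt; apply: ns; rewrite ?size_tuple.
by have := complexity_nondecr hL n0; have := complexity_nondecr hL (ltn0Sn n); lia.
Qed.

(* Nonstrong words make the first difference of the complexity nonincreasing;
   once it is constant, the multiplicities, which sum to the second difference,
   all vanish. *)
Lemma eventually_neutral : eventually (nonstrong L) -> eventually (neutral L).
Proof.
case/eventually_pos => N N0 ns.
have [M NM const] := nonincr_eventually_const (complexity_concave N0 ns).
exists M => w Lw Mw; have Nw := leq_trans NM Mw; have w0 := leq_trans N0 Nw.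
have le (t : (size w).-tuple A) :
    L t -> (#|Exlr L t|).+1 <= #|Exl L t| + #|Exr L t| ?= iff neutral L t.
  by move=> Lt; apply: leqif_eq; apply: ns; rewrite ?size_tuple.
have /eqP : \sum_(t : (size w).-tuple A | L t) (#|Exlr L t|).+1 =
            \sum_(t : (size w).-tuple A | L t) (#|Exl L t| + #|Exr L t|).
  rewrite sum_card_Exlr_succ // sum_card_Exl_Exr //.
  have := const _ Mw; have := const _ (leqW Mw).
  by have := complexity_nondecr hL w0; have := complexity_nondecr hL (ltn0Sn (size w)); lia.
by rewrite (leqif_sum le).2 => /forall_inP /(_ (in_tuple w) Lw).
Qed.

Lemma eventually_unique_special_ext : eventually (neutral L) ->
  eventually (fun w => unique_right_special_ext L w /\ unique_left_special_ext L w).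
Proof.
case/eventually_pos => N N0 neu; have pos n : N <= n -> 0 < n := leq_trans N0.
have ns w : L w -> N <= size w -> nonstrong L w.
  by move=> Lw Nw; rewrite /nonstrong -(eqP (neu w Lw Nw)).
pose B := complexity L N.+1 - complexity L N.
have diff_le n : N <= n -> complexity L n.+1 <= complexity L n + B.
  move=> Nn; have := nonincr_le (complexity_concave N0 ns) Nn.
  by have := complexity_nondecr hL (pos n Nn); rewrite /B; lia.
apply: eventually_and.
  apply: (unique_special_ext_of_neutral (X := Exl L) (ext := cons) _ _ diff_le (Exr_gt0 hL)).
  - by move=> n F /pos; apply: sum_tuple_cons.
  - by move=> n /pos; apply: sum_card_Exr.
  - by move=> w Lw Nw; rewrite -card_Exlr_cons //; apply/eqP/neu.
apply: (unique_special_ext_of_neutral (X := Exr L) (ext := fun b w => rcons w b)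
          _ _ diff_le (Exl_gt0 hL)).
- by move=> n F /pos; apply: sum_tuple_rcons.
- by move=> n /pos; apply: sum_card_Exl.
- by move=> w Lw Nw; rewrite -card_Exlr_rcons // addnC; apply/eqP/neu.
Qed.

End Eventually.

Theorem mainTheorem4 (A : finType) (L : pred (seq A)) :
  is_language L -> recurrent L -> (eventually_dendric L <-> RBC L).
Proof.
move=> hL _; split => [[n0 dendric] | [n0 rbc]].
- have ns : eventually L (nonstrong L).
    by exists n0 => w Lw /(dendric w Lw); apply: tree_nonstrong.
  have neu := eventually_neutral hL ns.
  have [n1 H] := eventually_and neu (eventually_unique_special_ext hL neu).
  exists n1 => w bw; have /and3P [Lw _ _] := bw.
  by move=> /(H w Lw) [nw [ur ul]]; apply: neutral_regular.
have uniq : eventually L (fun w => unique_right_special_ext L w /\ unique_left_special_ext L w).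
  exists n0 => w Lw n0w; have reg bw := rbc w bw n0w.
  by split; [apply: regular_unique_right_ext | apply: regular_unique_left_ext].
have ns : eventually L (nonstrong L).
  by case: uniq => n HU; exists n => w Lw /(HU w Lw) [ur _]; apply: unique_ext_nonstrong.
have [n1 H] := eventually_and (eventually_neutral hL ns) uniq.
by exists n1 => w Lw /(H w Lw) [nw [ur ul]]; apply: neutral_tree.
Qed.
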